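(* Let $R$ be a commutative ring with $1$ such that every maximal ideal of $R$ is quasi-pure. Then $R$ is zero-dimensional, i.e. every prime ideal of $R$ is maximal.
   Context: An ideal $I$ of a commutative ring $R$ is called quasi-pure if for each $f\in I$ there exists an integer $n\ge 1$ such that $\operatorname{Ann}(f^n)+I=R$ (equivalently, for each $f\in I$ there is $g\in I$ with $f(1-g)$ nilpotent). *)

From HB Require Import structures.
From mathcomp Require Import all_boot all_order all_algebra.
Set Implicit Arguments. Unset Strict Implicit. Unset Printing Implicit Defensive.
Import GRing.Theory.
Local Open Scope ring_scope.

Section IdealDefs.
Variable R : comPzRingType.

Definition is_ideal (I : R -> Prop) : Prop :=
  [/\ I 0, (forall x y, I x -> I y -> I (x + y)) & (forall r x, I x -> I (r * x))].

Definition prime_ideal (I : R -> Prop) : Prop :=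
  [/\ is_ideal I, ~ I 1 & (forall a b, I (a * b) -> I a \/ I b)].

Definition maximal_ideal (I : R -> Prop) : Prop :=
  [/\ is_ideal I, ~ I 1 &
      (forall J : R -> Prop, is_ideal J -> ~ J 1 ->
         (forall x, I x -> J x) -> forall x, J x -> I x)].

Definition ann (x : R) : R -> Prop := fun a => a * x = 0.

Definition ideal_sum (I J : R -> Prop) : R -> Prop :=
  fun z => exists a b, [/\ I a, J b & z = a + b].

Definition quasi_pure (I : R -> Prop) : Prop :=
  forall f, I f -> exists n : nat, (1 <= n)%N /\ forall z, ideal_sum (ann (f ^+ n)) I z.

End IdealDefs.

From HB Require Import structures.
From mathcomp Require Import all_boot all_order all_algebra.
From mathcomp Require Import boolp classical_sets.
Import GRing.Theory.
Local Open Scope ring_scope.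
Local Open Scope classical_set_scope.

(* Let P be prime and J a proper ideal containing P; extend J to a maximal
   ideal M (Krull).  For x in M, quasi-purity gives 1 = a + m with m in M and
   a x^n = 0 in P.  If a were in P it would lie in M, forcing 1 in M; hence
   x^n is in P and so is x.  Thus M, and a fortiori J, is contained in P. *)

Section Ideals.
Set Implicit Arguments.
Variable R : comPzRingType.
Implicit Types (J M P : set R) (F : set (set R)).

Lemma ideal_bigcup_chain F :
  F !=set0 -> (forall X, F X -> is_ideal X /\ ~ X 1) -> total_on F subset ->
  is_ideal (\bigcup_(X in F) X) /\ ~ (\bigcup_(X in F) X) 1.
Proof.
move=> [X0 FX0] Fproper Fchain; split; last by move=> [X /Fproper[]].
split.
- by exists X0 => //; have [[]] := Fproper _ FX0.
- move=> x y [X FX Xx] [Y FY Yy].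
  have [XY|YX] := Fchain _ _ FX FY.
    have [[_ Yadd _] _] := Fproper _ FY.
    by exists Y => //; apply: Yadd => //; exact: XY.
  have [[_ Xadd _] _] := Fproper _ FX.
  by exists X => //; apply: Xadd => //; exact: YX.
- move=> r x [X FX Xx]; have [[_ _ Xmul] _] := Fproper _ FX.
  by exists X => //; exact: Xmul.
Qed.

(* The empty set is admitted in the Zorn family only because it is the union
   of the empty chain. *)
Lemma exists_maximal_ideal_sup J :
  is_ideal J -> ~ J 1 -> exists2 M, maximal_ideal M & J `<=` M.
Proof.
move=> idJ J1; pose ProperSup X := [/\ is_ideal X, ~ X 1 & J `<=` X].
have [|A [PA Amax]] := @Zorn_bigcup R (fun X => X = set0 \/ ProperSup X).
  move=> F FP Fchain.
  have [[X0 FX0 X0n0]|Fempty] := pselect (exists2 X, F X & X !=set0); last first.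
    left; apply/seteqP; split=> // x [X FX Xx].
    by apply: Fempty; exists X => //; exists x.
  pose G := [set X | F X /\ X !=set0].
  have Gproper X : G X -> ProperSup X by move=> [/FP[->|//] [x]].
  have GX0 : G X0 by [].
  have -> : \bigcup_(X in F) X = \bigcup_(X in G) X.
    apply/seteqP; split=> x [X FX Xx]; exists X => //; last by case: FX.
    by split; last exists x.
  have [idU U1] : is_ideal (\bigcup_(X in G) X) /\ ~ (\bigcup_(X in G) X) 1.
    apply: ideal_bigcup_chain; first by exists X0.
      by move=> X /Gproper[].
    by move=> X Y [FX _] [FY _]; exact: Fchain.
  have [_ _ JX0] := Gproper _ GX0.
  by right; split=> // x /JX0 X0x; exists X0.
have [A0|[idA A1 JA]] := PA.
  have [J0 _ _] := idJ.
  case: (Amax J _ (or_intror (And3 idJ J1 (@subset_refl _ J)))).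
  by rewrite A0; split=> // JJ; exact: (JJ 0 J0).
exists A => //; split=> // K idK K1 AK x Kx.
apply: contrapT => Ax.
apply: (Amax K _ (or_intror (And3 idK K1 (fun y Jy => AK y (JA y Jy))))).
by split=> // KA; exact/Ax/KA.
Qed.

Lemma prime_idealX P f n : prime_ideal P -> P (f ^+ n) -> P f.
Proof.
move=> [_ P1 Pmul]; elim: n => [|n IHn]; first by rewrite expr0.
by rewrite exprS => /Pmul[].
Qed.

Lemma quasi_pure_sub_prime M P :
  is_ideal M -> ~ M 1 -> quasi_pure M -> prime_ideal P -> P `<=` M -> M `<=` P.
Proof.
move=> [_ Madd _] M1 qpM primeP PM x Mx.
have [n [_ annM]] := qpM x Mx.
have [a [m [axn0 Mm one_eq]]] := annM 1.
have [[P0 _ _] _ Pmul] := primeP.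
have [Pa|] : P a \/ P (x ^+ n) by apply: Pmul; rewrite axn0.
  by case: M1; rewrite one_eq; apply: Madd => //; exact: PM.
exact: prime_idealX.
Qed.

End Ideals.

Theorem lemma2p6 (R : comPzRingType)
  (hR : forall M : R -> Prop, maximal_ideal M -> quasi_pure M) :
  forall P : R -> Prop, prime_ideal P -> maximal_ideal P.
Proof.
move=> P primeP; have [idP P1 _] := primeP.
split=> // J idJ J1 PJ x Jx.
have [M maxM JM] := exists_maximal_ideal_sup idJ J1.
have [idM M1 _] := maxM.
apply: (quasi_pure_sub_prime idM M1 (hR M maxM) primeP) => //.
- by move=> y /PJ /JM.
- exact: JM.
Qed.
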